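(* Let $n\ge 2$, $A\in\mathrm{Mat}_{n\times n}(\mathbb{R})$, $q\in\mathbb{R}^n$ a formal equilibrium of the replicator field $X_A$, $B=-EAE^t$, $\eta_q(u)_i=q_i-\frac{e^{u_i}}{1+\sum_{j}e^{u_j}}$, and $\tilde Y_B(u)=(1+\sum_{i=1}^{n-1}e^{u_i})B\eta_q(u)$ on $\mathbb{R}^{n-1}$. Suppose $D=(d_{ij})\in\mathrm{Mat}_{(n-1)\times(n-1)}(\mathbb{R})$ is such that $DB$ is anti-symmetric and $D^tQ_1$ is diagonal, where $(Q_1)_{ij}=q_i-\delta_{ij}$, and let $H_D(u)=\sum_{i}\big(\sum_k d_{ki}q_k\big)u_i+\sum_i\big(\big(\sum_k d_{ki}q_k\big)-d_{ii}\big)e^{u_i}$. (1) If $B$ is invertible, then $\tilde Y_B$ is Hamiltonian with Hamiltonian $H_D$ with respect to the constant (pre)symplectic structure $\omega^\sharp=D^tB^{-1}$ (i.e. $\omega^\sharp\tilde Y_B=dH_D$); equivalently, the vector field $\frac{1}{x_n}X_A$ restricted to the interior of $\Delta^{n-1}$ is Hamiltonian with Hamiltonian $H_D\circ\phi^{-1}$ with respect to the presymplectic structure $\omega^\sharp=(d\phi^{-1})^tD^tB^{-1}(d\phi^{-1})$. (2) If $D^t$ is invertible, then $\tilde Y_B$ is Hamiltonian with Hamiltonian $H_D$ with respect to the constant Poisson structure $\pi^\sharp=B(D^t)^{-1}$ (i.e. $\tilde Y_B=\pi^\sharp dH_D$); equivalently, $\frac{1}{x_n}X_A$ restricted to the interior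 of $\Delta^{n-1}$ is Hamiltonian with Hamiltonian $H_D\circ\phi^{-1}$ with respect to the Poisson structure $\pi^\sharp=(d\phi)B(D^t)^{-1}(d\phi)^t$.
   Context: $X_A(x)_i=x_i((Ax)_i-x^tAx)$ on $\Delta^{n-1}=\{x\in\mathbb{R}^n_{\ge0}:\sum x_i=1\}$. A formal equilibrium is $q\in\mathbb{R}^n$ with $\sum q_i=1$ and all $(Aq)_i$ equal. $E=[-I_{n-1}\mid\mathbb{1}]$. $\phi:\mathbb{R}^{n-1}\to(\Delta^{n-1})^\circ$, $\phi(u)=\big(\frac{e^{u_1}}{1+\sum_j e^{u_j}},\dots,\frac{e^{u_{n-1}}}{1+\sum_j e^{u_j}},\frac{1}{1+\sum_j e^{u_j}}\big)$, a diffeomorphism with $\phi^{-1}(x)=(\log(x_i/x_n))_{i\le n-1}$; $d\phi$, $d\phi^{-1}$ denote Jacobians, and the structures on $(\Delta^{n-1})^\circ$ in the ''equivalently'' parts are the transports of the constant structures on $\mathbb{R}^{n-1}$ via $\phi$. For a 2-form $\omega$, $\omega^\sharp X=\omega(X,\cdot)$ and $X$ is Hamiltonian with Hamiltonian $H$ if $\omega^\sharp X=dH$; for a Poisson bivector $\pi$, $\pi^\sharp\alpha=\pi(\alpha,\cdot)$ and the Hamiltonian field of $H$ is $\pi^\sharp dH$. *)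

From HB Require Import structures.
From mathcomp Require Import all_boot all_order all_algebra.
From mathcomp Require Import all_classical all_reals all_analysis.
Set Implicit Arguments. Unset Strict Implicit. Unset Printing Implicit Defensive.
Import Order.TTheory GRing.Theory Num.Theory.
Import numFieldNormedType.Exports.
Local Open Scope ring_scope.

(* Convention: n = m.+1 (so n >= 2 iff 1 <= m).  Points of R^k are row
   vectors 'rV[R]_k (the normed spaces on which MathComp-Analysis derivatives
   live); matrices act on column vectors, i.e. on transposes. *)

Section Defs.
Variables (R : realType) (m : nat).

Definition replicator (A : 'M[R]_m.+1) (x : 'rV[R]_m.+1) : 'rV[R]_m.+1 :=
  \row_i (x 0 i * ((A *m x^T) i 0 - (x *m A *m x^T) 0 0)).

Definition formal_equilibrium (A : 'M[R]_m.+1) (q : 'rV[R]_m.+1) : Prop :=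
  \sum_i q 0 i = 1 /\ exists c : R, forall i, (A *m q^T) i 0 = c.

Definition Emx : 'M[R]_(m, m.+1) :=
  \matrix_(i, j) (if j == widen_ord (leqnSn m) i then -1
                  else if j == ord_max then 1 else 0).

Definition Bmx (A : 'M[R]_m.+1) : 'M[R]_m := - (Emx *m A *m Emx^T).

Definition sumexp (u : 'rV[R]_m) : R := 1 + \sum_j expR (u 0 j).

Definition eta_q (q : 'rV[R]_m.+1) (u : 'rV[R]_m) : 'rV[R]_m :=
  \row_i (q 0 (widen_ord (leqnSn m) i) - expR (u 0 i) / sumexp u).

Definition Ytilde (A : 'M[R]_m.+1) (q : 'rV[R]_m.+1) (u : 'rV[R]_m)
  : 'rV[R]_m := (sumexp u *: (Bmx A *m (eta_q q u)^T))^T.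

Definition Q1 (q : 'rV[R]_m.+1) : 'M[R]_m :=
  \matrix_(i, j) (q 0 (widen_ord (leqnSn m) i) - (i == j)%:R).

Definition antisym_mx (M : 'M[R]_m) : Prop := M^T = - M.

Definition cD (D : 'M[R]_m) (q : 'rV[R]_m.+1) (i : 'I_m) : R :=
  \sum_k D k i * q 0 (widen_ord (leqnSn m) k).

Definition H_D (D : 'M[R]_m) (q : 'rV[R]_m.+1) (u : 'rV[R]_m) : R :=
  \sum_i cD D q i * u 0 i + \sum_i (cD D q i - D i i) * expR (u 0 i).

Definition phi (u : 'rV[R]_m) : 'rV[R]_m.+1 :=
  \row_j ((if unlift ord_max j is Some i then expR (u 0 i) else 1) / sumexp u).

Definition phiinv (x : 'rV[R]_m.+1) : 'rV[R]_m :=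
  \row_i ln (x 0 (widen_ord (leqnSn m) i) / x 0 ord_max).

Definition simplex_interior (x : 'rV[R]_m.+1) : Prop :=
  (forall i, 0 < x 0 i) /\ \sum_i x 0 i = 1.

Definition tangent (v : 'rV[R]_m.+1) : Prop := \sum_i v 0 i = 0.

End Defs.

Definition grad (R : realType) (k : nat) (H : 'rV[R]_k -> R) (u : 'rV[R]_k)
  : 'cV[R]_k := \col_i ('d H u (delta_mx 0 i)).

(* The usual Jacobian matrix df(p) (rows = output coordinates); the library's
   [jacobian] is its transpose (it acts on row vectors). *)
Definition Jac (R : realType) (k l : nat) (f : 'rV[R]_k -> 'rV[R]_l)
  (p : 'rV[R]_k) : 'M[R]_(l, k) := (jacobian f p)^T.

(* Write c_i = sum_k d_ki q_k.  The gradient of H_D is c_i + (c_i - d_ii) e^{u_i}.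
   Since D^t Q_1 = (c_i - d_ji)_ij is diagonal, d_ji = c_i for j <> i, and the
   gradient becomes (1 + sum_j e^{u_j}) D^t eta_q(u); as Ytilde_B is
   (1 + sum_j e^{u_j}) B eta_q(u), both Hamiltonian identities on R^{n-1} reduce
   to cancelling B^{-1} B or (D^t)^{-1} D^t.  On the open simplex, d(phi^{-1})
   sends x_n^{-1} X_A to Ytilde_B (here E A q = 0 because q is a formal
   equilibrium), d(phi) sends Ytilde_B back, and d(phi^{-1}) d(phi) = I because
   phi^{-1} o phi = id; the chain rule transports both identities. *)

From HB Require Import structures.
From mathcomp Require Import all_boot all_order all_algebra.
From mathcomp Require Import all_classical all_reals all_analysis.
From mathcomp Require Import ring.
Import Order.TTheory GRing.Theory Num.Theory.
Import numFieldNormedType.Exports.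
Local Open Scope ring_scope.

Lemma is_diffP (R : numFieldType) (V W : normedModType R) (f df : V -> W) x :
  is_diff x f df <-> differentiable f x /\ forall v, 'd f x v = df v.
Proof.
split=> [fdf|[fx dfE]]; first by split=> // v; rewrite diff_val.
by apply: DiffDef => //; apply/funext.
Qed.

Section RealValuedDifferentials.
Context {R : realType} {k : nat}.
Implicit Types (x : 'rV[R]_k) (f g df dg : 'rV[R]_k -> R).

Lemma is_diff_ext {f g x df dg} : f =1 g -> df =1 dg ->
  is_diff x f df -> is_diff x g dg.
Proof. by move=> /funext <- /funext <-. Qed.

Lemma is_diff_coord x i : is_diff x (fun z => z 0 i) (fun v => v 0 i).
Proof.
have fx := @differentiable_coord R 1 k x 0 i.
apply/is_diffP; split=> // v; rewrite -deriveE //.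
have := derive_mx (@derivable_id _ _ x v).
by rewrite derive_id => /(congr1 (fun M : 'rV[R]_k => M 0 i)) ->; rewrite mxE.
Qed.

Lemma is_diff_sum {I : Type} (r : seq I) {F dF : I -> 'rV[R]_k -> R} {x} :
  (forall i, is_diff x (F i) (dF i)) ->
  is_diff x (fun z => \sum_(i <- r) F i z) (fun v => \sum_(i <- r) dF i v).
Proof.
move=> FdF; elim: r => [|a r IH].
  by apply: is_diff_ext (is_diff_cst (0 : R) x) => /= z; rewrite ?big_nil.
by apply: is_diff_ext (is_diffD (FdF a) IH) => /= z; rewrite big_cons.
Qed.

Lemma is_diff_scale {f x df} (c : R) : is_diff x f df ->
  is_diff x (fun z => c * f z) (fun v => c * df v).
Proof. by move=> fdf; apply: is_diff_ext (is_diffZ c fdf). Qed.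

Lemma is_diff_mul {f g x df dg} : is_diff x f df -> is_diff x g dg ->
  is_diff x (fun z => f z * g z) (fun v => f x * dg v + g x * df v).
Proof. by move=> fdf gdg; apply: is_diff_ext (is_diffM fdf gdg). Qed.

Lemma is_diff_inv {f x df} : is_diff x f df -> f x != 0 ->
  is_diff x (fun z => (f z)^-1) (fun v => - (f x)^-2 * df v).
Proof.
move=> /is_diffP[fx dfE] fx0; apply/is_diffP; split; first exact: differentiableV.
by move=> v; rewrite (diffV fx fx0) /= dfE.
Qed.

Lemma is_diff_derive_comp {h : R -> R} {dh : R} {f x df} :
  is_derive (f x) 1 h dh -> is_diff x f df ->
  is_diff x (fun z => h (f z)) (fun v => df v * dh).
Proof.
case=> hfx dhE /is_diffP[fx dfE].
have dh' : differentiable h (f x) by apply/derivable1_diffP.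
apply/is_diffP; split; first exact: differentiable_comp.
by move=> v; rewrite (diff_comp fx dh') /= deriv1E // derive1E dhE dfE.
Qed.

Lemma is_diff_expR_coord x i :
  is_diff x (fun z => expR (z 0 i)) (fun v => v 0 i * expR (x 0 i)).
Proof. exact: is_diff_derive_comp (is_derive_expR _) (is_diff_coord x i). Qed.

Lemma sum_delta_mx_mul (a : 'I_k) (F : 'I_k -> R) :
  \sum_j (delta_mx 0 a : 'rV[R]_k) 0 j * F j = F a.
Proof.
rewrite (bigD1 a) //= mxE !eqxx mul1r big1 ?addr0 // => j /negPf ja.
by rewrite mxE ja andbF mul0r.
Qed.

Lemma diff_grad (H : 'rV[R]_k -> R) u v : 'd H u v = \sum_i v 0 i * grad H u i 0.
Proof.
rewrite {1}(row_sum_delta v) linear_sum; apply: eq_bigr => i _.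
by rewrite linearZ mxE.
Qed.

Lemma grad_is_diff (H : 'rV[R]_k -> R) u (g : 'I_k -> R) :
  is_diff u H (fun v => \sum_i v 0 i * g i) -> grad H u = \col_i g i.
Proof.
by move=> /is_diffP[_ dHE]; apply/colP => i; rewrite !mxE dHE sum_delta_mx_mul.
Qed.

End RealValuedDifferentials.

Section Jacobians.
Context {R : realType} {k l : nat}.

Lemma is_diff_row (f df : 'rV[R]_k -> 'rV[R]_l) x :
  (forall j, is_diff x (fun z => f z 0 j) (fun v => df v 0 j)) -> is_diff x f df.
Proof.
move=> fdf; have fx : differentiable f x.
  have -> : f = \sum_(j < l) (fun z => f z 0 j *: (delta_mx 0 j : 'rV[R]_l)).
    by apply/funext => z; rewrite fct_sumE; exact: row_sum_delta.
  by apply: differentiable_sum => j; apply: differentiableZl; case: (fdf j).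
apply/is_diffP; split=> // v; rewrite -deriveE // derive_mx; last exact: diff_derivable.
by apply/rowP => j; rewrite mxE deriveE //; case/is_diffP: (fdf j) => _ ->.
Qed.

Lemma Jac_mul_tr (f : 'rV[R]_k -> 'rV[R]_l) x v : Jac f x *m v^T = ('d f x v)^T.
Proof. by rewrite /Jac -trmx_mul /jacobian mul_rV_lin1. Qed.

Lemma grad_comp (f : 'rV[R]_k -> 'rV[R]_l) (H : 'rV[R]_l -> R) x :
  differentiable f x -> differentiable H (f x) ->
  grad (H \o f) x = (Jac f x)^T *m grad H (f x).
Proof.
move=> fx Hfx; apply/colP => i; rewrite !mxE diff_comp //= diff_grad.
by apply: eq_bigr => j _; rewrite /Jac trmxK /jacobian !mxE.
Qed.

End Jacobians.

Section Indices.
Context {m : nat}.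
Local Notation w i := (widen_ord (leqnSn m) i).

Lemma widen_ord_eq (a b : 'I_m) : (w a == w b) = (a == b).
Proof. by apply/eqP/eqP => [/(congr1 val) /= /val_inj|->]. Qed.

Lemma widen_ord_neq_max (a : 'I_m) : (w a == ord_max) = false.
Proof. by apply/negbTE; rewrite -val_eqE /= neq_ltn ltn_ord. Qed.

Lemma lift_max_widen (a : 'I_m) : lift ord_max a = w a.
Proof. exact/val_inj/lift_max. Qed.

Lemma unlift_max_widen (a : 'I_m) : unlift ord_max (w a) = Some a.
Proof. by rewrite -lift_max_widen liftK. Qed.

Lemma ord_max_or_widen (j : 'I_m.+1) : j = ord_max \/ exists i : 'I_m, j = w i.
Proof.
case: (unliftP ord_max j) => [i ->|->]; last by left.
by right; exists i; apply: lift_max_widen.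
Qed.

End Indices.

Section ReplicatorCoordinates.
Context {R : realType} {m : nat}.
Local Notation w i := (widen_ord (leqnSn m) i).
Implicit Types (A : 'M[R]_m.+1) (q : 'rV[R]_m.+1) (D : 'M[R]_m) (u : 'rV[R]_m).

Lemma Emx_mul (y : 'cV[R]_m.+1) i : (@Emx R m *m y) i 0 = y ord_max 0 - y (w i) 0.
Proof.
rewrite mxE big_ord_recr /= mxE eq_sym widen_ord_neq_max eqxx mul1r addrC.
rewrite (bigD1 i) //= big1 => [|j ji]; rewrite mxE widen_ord_eq ?eqxx.
  by rewrite mulN1r addr0.
by rewrite (negPf ji) widen_ord_neq_max mul0r.
Qed.

Lemma trEmx_mul_widen (z : 'cV[R]_m) i : ((@Emx R m)^T *m z) (w i) 0 = - z i 0.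
Proof.
rewrite mxE (bigD1 i) //= big1 => [|j ji]; rewrite !mxE widen_ord_eq ?eqxx.
  by rewrite mulN1r addr0.
by rewrite eq_sym (negPf ji) widen_ord_neq_max mul0r.
Qed.

Lemma trEmx_mul_max (z : 'cV[R]_m) : ((@Emx R m)^T *m z) ord_max 0 = \sum_i z i 0.
Proof.
by rewrite mxE; apply: eq_bigr => i _; rewrite !mxE eq_sym widen_ord_neq_max eqxx mul1r.
Qed.

Lemma sumexp_gt0 u : 0 < sumexp u.
Proof. by apply: ltr_pwDl => //; apply: sumr_ge0 => j _; apply: expR_ge0. Qed.

Lemma is_diff_sumexp u :
  is_diff u (@sumexp R m) (fun v => \sum_i v 0 i * expR (u 0 i)).
Proof.
apply: is_diff_ext (is_diffD (is_diff_cst (1 : R) u)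
                     (is_diff_sum (index_enum 'I_m) (is_diff_expR_coord u))) => v //=.
by rewrite add0r.
Qed.

Lemma is_diff_H_D D q u :
  is_diff u (H_D D q)
    (fun v => \sum_i v 0 i * (cD D q i + (cD D q i - D i i) * expR (u 0 i))).
Proof.
have lin := is_diff_sum (index_enum 'I_m)
  (fun i => is_diff_scale (cD D q i) (is_diff_coord u i)).
have ex := is_diff_sum (index_enum 'I_m)
  (fun i => is_diff_scale (cD D q i - D i i) (is_diff_expR_coord u i)).
apply: is_diff_ext (is_diffD lin ex) => v //=.
by rewrite fctE -big_split; apply: eq_bigr => i _ /=; ring.
Qed.

Lemma grad_H_D D q u :
  grad (H_D D q) u = \col_i (cD D q i + (cD D q i - D i i) * expR (u 0 i)).
Proof. exact/grad_is_diff/is_diff_H_D. Qed.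

Lemma trmx_mul_Q1E D q i j : (D^T *m Q1 q) i j = cD D q i - D j i.
Proof.
have -> : Q1 q = \matrix_(l, _) q 0 (w l) - 1%:M by apply/matrixP => l j'; rewrite !mxE.
by rewrite mulmxBr mulmx1 !mxE; congr (_ - _); apply: eq_bigr => l _; rewrite !mxE.
Qed.

Lemma grad_H_D_eta_q D q u : is_diag_mx (D^T *m Q1 q) ->
  grad (H_D D q) u = sumexp u *: (D^T *m (eta_q q u)^T).
Proof.
move=> /is_diag_mxP DQdiag; rewrite grad_H_D; apply/colP => i; rewrite !mxE.
have S0 : sumexp u != 0 by rewrite gt_eqF ?sumexp_gt0.
have offdiag j : j != i -> D j i = cD D q i.
  by move=> ji; apply/eqP; rewrite eq_sym -subr_eq0 -trmx_mul_Q1E DQdiag // eq_sym.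
have Ssplit : sumexp u = 1 + expR (u 0 i) + \sum_(j | j != i) expR (u 0 j).
  by rewrite /sumexp (bigD1 i) //= addrA.
rewrite mulr_sumr.
rewrite (eq_bigr (fun j => sumexp u * (D j i * q 0 (w j)) - D j i * expR (u 0 j)));
  last by move=> j _; rewrite !mxE; field.
rewrite sumrB -mulr_sumr -/(cD D q i) (bigD1 i) //=.
rewrite (eq_bigr (fun j => cD D q i * expR (u 0 j))) => [|j /offdiag-> //].
by rewrite -mulr_sumr Ssplit; ring.
Qed.

Lemma trYtilde A q u : (Ytilde A q u)^T = sumexp u *: (Bmx A *m (eta_q q u)^T).
Proof. exact: trmxK. Qed.

Lemma Ytilde_presymplectic_Hamiltonian A D q u :
  is_diag_mx (D^T *m Q1 q) -> Bmx A \in unitmx ->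
  D^T *m invmx (Bmx A) *m (Ytilde A q u)^T = grad (H_D D q) u.
Proof.
move=> DQdiag Bunit; rewrite trYtilde grad_H_D_eta_q // -scalemxAr.
by rewrite -mulmxA (mulmxA (invmx _)) mulVmx // mul1mx.
Qed.

Lemma Ytilde_Poisson_Hamiltonian A D q u :
  is_diag_mx (D^T *m Q1 q) -> D^T \in unitmx ->
  (Ytilde A q u)^T = Bmx A *m invmx D^T *m grad (H_D D q) u.
Proof.
move=> DQdiag Dunit; rewrite trYtilde grad_H_D_eta_q // -scalemxAr.
by rewrite -mulmxA (mulmxA (invmx _)) mulVmx // mul1mx.
Qed.

End ReplicatorCoordinates.

Section Charts.
Context {R : realType} {m : nat}.
Local Notation w i := (widen_ord (leqnSn m) i).
Implicit Types (u : 'rV[R]_m) (x : 'rV[R]_m.+1).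

Definition dphi u (v : 'rV[R]_m) : 'rV[R]_m.+1 :=
  \row_j ((if unlift ord_max j is Some i then v 0 i * expR (u 0 i) else 0) / sumexp u
          - phi u 0 j * (\sum_l v 0 l * expR (u 0 l)) / sumexp u).

Definition dphiinv x (v : 'rV[R]_m.+1) : 'rV[R]_m :=
  \row_i (v 0 (w i) / x 0 (w i) - v 0 ord_max / x 0 ord_max).

Lemma is_diff_phi u : is_diff u (@phi R m) (dphi u).
Proof.
apply: is_diff_row => j.
have S0 : sumexp u != 0 by rewrite gt_eqF ?sumexp_gt0.
have invS := is_diff_inv (is_diff_sumexp u) S0.
case E: (unlift ord_max j) => [i|].
  by apply: is_diff_ext (is_diff_mul (is_diff_expR_coord u i) invS) => [z|v];
    rewrite !mxE E //=; field; rewrite S0.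
by apply: is_diff_ext (is_diff_scale 1 invS) => [z|v];
  rewrite !mxE E //=; field; rewrite S0.
Qed.

Lemma is_diff_phiinv x : (forall j, 0 < x 0 j) -> is_diff x (@phiinv R m) (dphiinv x).
Proof.
move=> xpos; apply: is_diff_row => i.
have xn0 : x 0 ord_max != 0 by rewrite gt_eqF.
have xi0 : x 0 (w i) != 0 by rewrite gt_eqF.
have ratio := is_diff_mul (is_diff_coord x (w i))
                (is_diff_inv (is_diff_coord x ord_max) xn0).
have ln_ratio := is_derive1_ln (divr_gt0 (xpos (w i)) (xpos ord_max)).
apply: is_diff_ext (is_diff_derive_comp ln_ratio ratio) => [z|v]; rewrite !mxE //=.
by field; rewrite xn0 xi0.
Qed.

Lemma phi_gt0 u j : 0 < phi u 0 j.
Proof.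
by rewrite mxE divr_gt0 ?sumexp_gt0 //; case: (unlift _ _) => [i|]; rewrite ?expR_gt0.
Qed.

Lemma phiK : cancel (@phi R m) (@phiinv R m).
Proof.
move=> u; apply/rowP => i; rewrite !mxE unlift_max_widen unlift_none.
have S0 : sumexp u != 0 by rewrite gt_eqF ?sumexp_gt0.
by rewrite mulrC invf_div divr1 mulrC divfK // expRK.
Qed.

Lemma diff_phiinv_phi u v : 'd (@phiinv R m) (phi u) ('d (@phi R m) u v) = v.
Proof.
have /is_diffP[phiu _] := is_diff_phi u.
have /is_diffP[phiinvpu _] := is_diff_phiinv _ (phi_gt0 u).
have /is_diffP[_ idE] := is_diff_id u.
rewrite -[RHS]idE.
have <- : @phiinv R m \o @phi R m = id by apply/funext => z; exact: phiK.
by rewrite diff_comp.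
Qed.

Lemma Jac_phiinv_phi u : Jac (@phiinv R m) (phi u) *m Jac (@phi R m) u = 1%:M.
Proof.
rewrite /Jac -trmx_mul -[1%:M]trmx1; congr trmx; apply/row_matrixP => l.
by rewrite !rowE mulmxA !mul_rV_lin1 /= diff_phiinv_phi mulmx1.
Qed.

End Charts.

Section SimplexInterior.
Context {R : realType} {m : nat}.
Local Notation w i := (widen_ord (leqnSn m) i).
Variable x : 'rV[R]_m.+1.
Hypothesis xpos : forall j, 0 < x 0 j.
Hypothesis xsum : \sum_j x 0 j = 1.
Local Notation xn := (x 0 ord_max).
Implicit Types (A : 'M[R]_m.+1) (q : 'rV[R]_m.+1) (D : 'M[R]_m).

Let xn_neq0 : xn != 0. Proof. by rewrite gt_eqF. Qed.
Let xw_neq0 i : x 0 (w i) != 0. Proof. by rewrite gt_eqF. Qed.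

Lemma expR_phiinv i : expR (phiinv x 0 i) = x 0 (w i) / xn.
Proof. by rewrite mxE lnK // posrE divr_gt0. Qed.

Lemma sum_widen_simplex : \sum_i x 0 (w i) = 1 - xn.
Proof. by rewrite -xsum big_ord_recr /= addrK. Qed.

Lemma sumexp_phiinv : sumexp (phiinv x) = xn^-1.
Proof.
rewrite /sumexp (eq_bigr _ (fun i _ => expR_phiinv i)) -mulr_suml sum_widen_simplex.
by field.
Qed.

Lemma phi_phiinv : phi (phiinv x) = x.
Proof.
apply/rowP => j; rewrite mxE sumexp_phiinv.
case: (ord_max_or_widen j) => [->|[i ->]].
  by rewrite unlift_none mul1r invrK.
by rewrite unlift_max_widen expR_phiinv invrK divfK.
Qed.

Lemma Ytilde_phiinv A q : formal_equilibrium A q ->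
  Ytilde A q (phiinv x) = \row_i (xn^-1 * ((A *m x^T) (w i) 0 - (A *m x^T) ord_max 0)).
Proof.
move=> [qsum [c Aq]].
have Eeta : (@Emx R m)^T *m (eta_q q (phiinv x))^T = x^T - q^T.
  have etaE i : (eta_q q (phiinv x))^T i 0 = q 0 (w i) - x 0 (w i).
    by rewrite 2!mxE expR_phiinv sumexp_phiinv invrK divfK.
  apply/colP => j; case: (ord_max_or_widen j) => [->|[i ->]].
    rewrite trEmx_mul_max (eq_bigr _ (fun i _ => etaE i)) sumrB sum_widen_simplex.
    by rewrite -qsum big_ord_recr /= !mxE; ring.
  by rewrite trEmx_mul_widen etaE !mxE opprB.
have EAq : @Emx R m *m (A *m q^T) = 0.
  by apply/colP => i; rewrite Emx_mul !Aq mxE subrr.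
apply/rowP => i; rewrite /Ytilde /Bmx mulNmx -!mulmxA Eeta mulmxBr mulmxBr EAq subr0.
by rewrite 3!mxE Emx_mul sumexp_phiinv [RHS]mxE opprB.
Qed.

Lemma scaled_replicatorE A : xn^-1 *: (replicator A x)^T =
  (\row_j (xn^-1 * (x 0 j * ((A *m x^T) j 0 - (x *m (A *m x^T)) 0 0))))^T.
Proof. by apply/colP => j; rewrite /replicator -mulmxA !mxE. Qed.

Lemma dphiinv_replicator_row (a : 'cV[R]_m.+1) (s : R) :
  dphiinv x (\row_j (xn^-1 * (x 0 j * (a j 0 - s)))) =
  \row_i (xn^-1 * (a (w i) 0 - a ord_max 0)).
Proof. by apply/rowP => i; rewrite !mxE; field; rewrite xn_neq0 xw_neq0. Qed.

Lemma dphi_phiinv_difference (a : 'cV[R]_m.+1) :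
  dphi (phiinv x) (\row_i (xn^-1 * (a (w i) 0 - a ord_max 0))) =
  \row_j (xn^-1 * (x 0 j * (a j 0 - (x *m a) 0 0))).
Proof.
have mean : \sum_i (\row_i (xn^-1 * (a (w i) 0 - a ord_max 0))) 0 i
                 * expR (phiinv x 0 i) = xn^-2 * ((x *m a) 0 0 - a ord_max 0).
  rewrite (eq_bigr (fun i => xn^-2 * (x 0 (w i) * a (w i) 0 - x 0 (w i) * a ord_max 0)));
    last by move=> i _; rewrite mxE expR_phiinv; field.
  rewrite -mulr_sumr sumrB -mulr_suml sum_widen_simplex mxE big_ord_recr /=.
  by congr (_ * _); ring.
apply/rowP => j; rewrite mxE mean phi_phiinv sumexp_phiinv [RHS]mxE.
case: (ord_max_or_widen j) => [->|[i ->]].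
  by rewrite unlift_none; field.
by rewrite unlift_max_widen expR_phiinv mxE; field.
Qed.

Lemma Jac_phiinv_replicator A q : formal_equilibrium A q ->
  Jac (@phiinv R m) x *m (xn^-1 *: (replicator A x)^T) = (Ytilde A q (phiinv x))^T.
Proof.
move=> qeq; have /is_diffP[_ dE] := is_diff_phiinv _ xpos.
by rewrite scaled_replicatorE Jac_mul_tr dE dphiinv_replicator_row Ytilde_phiinv.
Qed.

Lemma Jac_phi_Ytilde A q : formal_equilibrium A q ->
  Jac (@phi R m) (phiinv x) *m (Ytilde A q (phiinv x))^T = xn^-1 *: (replicator A x)^T.
Proof.
move=> qeq; have /is_diffP[_ dE] := is_diff_phi (phiinv x).
by rewrite Ytilde_phiinv // Jac_mul_tr dE dphi_phiinv_difference scaled_replicatorE.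
Qed.

Lemma differentiable_comp_phiinv (H : 'rV[R]_m -> R) :
  differentiable H (phiinv x) -> differentiable (H \o @phiinv R m) x.
Proof.
by case/is_diffP: (is_diff_phiinv _ xpos) => phiinvx _; apply: differentiable_comp.
Qed.

Lemma grad_comp_phiinv (H : 'rV[R]_m -> R) : differentiable H (phiinv x) ->
  grad (H \o @phiinv R m) x = (Jac (@phiinv R m) x)^T *m grad H (phiinv x).
Proof. by case/is_diffP: (is_diff_phiinv _ xpos) => phiinvx _; apply: grad_comp. Qed.

Lemma Jac_phiinv_Jac_phi : Jac (@phiinv R m) x *m Jac (@phi R m) (phiinv x) = 1%:M.
Proof. by rewrite -[in Jac _ x]phi_phiinv Jac_phiinv_phi. Qed.

End SimplexInterior.

Theorem corollary4p7 (R : realType) (m : nat) (hm : (1 <= m)%N)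
  (A : 'M[R]_m.+1) (q : 'rV[R]_m.+1) (hq : formal_equilibrium A q)
  (D : 'M[R]_m)
  (hDB : antisym_mx (D *m Bmx A))
  (hDQ : is_diag_mx (D^T *m Q1 q)) :
  let B := Bmx A in
  let H := H_D D q in
  let Y := Ytilde A q in
  (* (1) presymplectic structure omega^# = D^t B^{-1} *)
  (B \in unitmx ->
     (forall u : 'rV[R]_m,
        differentiable H u /\ D^T *m invmx B *m (Y u)^T = grad H u)
     /\
     (forall x : 'rV[R]_m.+1, simplex_interior x ->
        let Jinv := Jac (@phiinv R m) x in
        let omega := Jinv^T *m D^T *m invmx B *m Jinv in
        let Xn := (x 0 ord_max)^-1 *: (replicator A x)^T in
        differentiable (H \o @phiinv R m) x /\
        forall v : 'rV[R]_m.+1, tangent v ->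
          'd (H \o @phiinv R m) x v = \sum_j (omega *m Xn) j 0 * v 0 j))
  /\
  (* (2) Poisson structure pi^# = B (D^t)^{-1} *)
  (D^T \in unitmx ->
     (forall u : 'rV[R]_m,
        differentiable H u /\ (Y u)^T = B *m invmx D^T *m grad H u)
     /\
     (forall x : 'rV[R]_m.+1, simplex_interior x ->
        let J := Jac (@phi R m) (phiinv x) in
        let pi := J *m B *m invmx D^T *m J^T in
        differentiable (H \o @phiinv R m) x /\
        (x 0 ord_max)^-1 *: (replicator A x)^T
          = pi *m grad (H \o @phiinv R m) x)).
Proof.
move=> B H Y; rewrite {}/B {}/H {}/Y.
have Hdiff u : differentiable (H_D D q) u by case/is_diffP: (is_diff_H_D D q u).
split=> [Bunit|Dunit]; split=> [u|x [xpos xsum]].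
- by split; [exact: Hdiff | exact: Ytilde_presymplectic_Hamiltonian].
- split; first exact: (differentiable_comp_phiinv _ xpos).
  move=> v _; rewrite diff_grad (grad_comp_phiinv _ xpos) //.
  rewrite -(Ytilde_presymplectic_Hamiltonian A) //.
  rewrite -(Jac_phiinv_replicator _ xpos xsum _ _ hq).
  by apply: eq_bigr => j _; rewrite mulrC !mulmxA.
- by split; [exact: Hdiff | exact: Ytilde_Poisson_Hamiltonian].
- split; first exact: (differentiable_comp_phiinv _ xpos).
  rewrite (grad_comp_phiinv _ xpos) // -(Jac_phi_Ytilde _ xpos xsum _ _ hq).
  rewrite (Ytilde_Poisson_Hamiltonian A D) //.
  rewrite !mulmxA -(mulmxA _ (Jac (@phi R m) _)^T) -trmx_mul.
  by rewrite (Jac_phiinv_Jac_phi _ xpos xsum) trmx1 mulmx1.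
Qed.
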